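(* Let $L$ be a simple Lie algebra over a field $k$ generated by its pure extremal elements, let $x,y\in E$ with $g(x,y)=1$ and let $L=\bigoplus_{i=-2}^2L_i$ be the associated $5$-grading. For $i\in\{-1,1\}$ let $Z_i=\{z\in L_i:[z,L_i]=0\}$. Then $Z_{-1}=Z_1=0$.
   Context: A nonzero $a\in L$ is extremal if there is $g_a\colon L\to k$ with $[a,[a,u]]=2g_a(u)a$, $[[a,u],[a,w]]=g_a([u,w])a+g_a(w)[a,u]-g_a(u)[a,w]$, $[a,[u,[a,w]]]=g_a([u,w])a-g_a(w)[a,u]-g_a(u)[a,w]$ for all $u,w$; sandwiches satisfy $[a,[a,u]]=0=[a,[u,[a,w]]]$; pure = non-sandwich; $E$ = set of extremal elements; $g$ = unique symmetric bilinear form with $g(a,u)=g_a(u)$ for $a\in E$. The $5$-grading associated with $x,y$: $L_{-2}=kx$, $L_{-1}=[x,U]$, $L_0=\{l:[x,l]\in kx,[y,l]\in ky\}$, $L_1=[y,U]$, $L_2=ky$, $U=\{u:g(u,x)=g(u,y)=g(u,[x,y])=0\}$. *)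

From HB Require Import structures.
From mathcomp Require Import all_boot all_order all_algebra.
Set Implicit Arguments. Unset Strict Implicit. Unset Printing Implicit Defensive.
Import GRing.Theory.
Local Open Scope ring_scope.

Section Lie.
Variables (k : fieldType) (L : lmodType k) (br : L -> L -> L).

Definition is_lie : Prop :=
  [/\ (forall (c : k) (u v w : L), br (c *: u + v) w = c *: br u w + br v w),
      (forall (c : k) (u v w : L), br w (c *: u + v) = c *: br w u + br w v),
      (forall u : L, br u u = 0) &
      (forall u v w : L, br u (br v w) + br v (br w u) + br w (br u v) = 0)].

Definition extremal_ids (a : L) (ga : L -> k) : Prop :=
  forall u w : L,
  [/\ br a (br a u) = (2 * ga u) *: a,
      br (br a u) (br a w) = ga (br u w) *: a + ga w *: br a u - ga u *: br a w &
      br a (br u (br a w)) = ga (br u w) *: a - ga w *: br a u - ga u *: br a w].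

Definition extremal (a : L) : Prop :=
  a != 0 /\ exists ga : L -> k, extremal_ids a ga.

Definition sandwich (a : L) : Prop :=
  forall u w : L, br a (br a u) = 0 /\ br a (br u (br a w)) = 0.

Definition pure (a : L) : Prop := extremal a /\ ~ sandwich a.

Definition extremal_form (g : L -> L -> k) : Prop :=
  [/\ (forall u v, g u v = g v u),
      (forall (c : k) (u v w : L), g (c *: u + v) w = c * g u w + g v w) &
      (forall a, extremal a -> extremal_ids a (g a))].

Definition subspace (S : L -> Prop) : Prop :=
  S 0 /\ (forall (c : k) u v, S u -> S v -> S (c *: u + v)).

Definition subalgebra (S : L -> Prop) : Prop :=
  subspace S /\ (forall u v, S u -> S v -> S (br u v)).

Definition ideal (I : L -> Prop) : Prop :=
  subspace I /\ (forall u v, I v -> I (br u v)).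

Definition generated_by_pure : Prop :=
  forall S : L -> Prop, subalgebra S -> (forall a, pure a -> S a) -> forall u, S u.

Definition simple_lie : Prop :=
  (exists u v, br u v != 0) /\
  forall I : L -> Prop, ideal I -> (forall u, I u -> u = 0) \/ (forall u, I u).

(* the 5-grading associated with x, y *)
Definition gradU (g : L -> L -> k) (x y : L) (u : L) : Prop :=
  g u x = 0 /\ g u y = 0 /\ g u (br x y) = 0.

Definition grad_m1 (g : L -> L -> k) (x y : L) (v : L) : Prop :=
  exists u, gradU g x y u /\ v = br x u.

Definition grad_p1 (g : L -> L -> k) (x y : L) (v : L) : Prop :=
  exists u, gradU g x y u /\ v = br y u.

Definition Zcenter (Li : L -> Prop) (z : L) : Prop :=
  Li z /\ forall w, Li w -> br z w = 0.

End Lie.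

(* Write g_a for g(a, -).  For extremal a, exp_a = 1 + ad a + g_a(-) a is an
   automorphism of L with inverse exp_(-a).  It maps a pure b to a pure element
   whose functional is, by uniqueness of g_e for non-sandwiches e, g_b o exp_(-a);
   comparing the two expressions gives g([a,b],t) = -g(b,[a,t]) for b pure, hence
   g([x,y],t) = g(x,[y,t]) (x and y cannot both be sandwiches), and shows that the
   pure radical {v | g(a,v) = 0 for all pure a} is an ideal, so it is 0.
   Now let u be in U with [x,u] central in L_(-1).  When g(x,v) = 0, [x,v] lies in
   [x,U] + kx, so the second extremal identity for x gives g(x,[u,v]) = 0; also
   g(x,[u,y]) = -g([x,y],u) = 0.  Hence g(a,[x,u]) = g(x,[u,a]) = 0 for all pure a:
   [x,u] is in the pure radical.  Z_1 is Z_(-1) with x and y exchanged. *)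

From HB Require Import structures.
From mathcomp Require Import all_boot all_order all_algebra.
From mathcomp Require Import ring.
From Stdlib Require Import Classical.
Set Implicit Arguments.
Unset Strict Implicit.
Unset Printing Implicit Defensive.
Import GRing.Theory.
Local Open Scope ring_scope.

Section LinearCombinations.
Variables (k : fieldType) (L : lmodType k).

Fixpoint lincomb (cs : seq k) (vs : seq L) : L :=
  match cs, vs with
  | c :: cs', v :: vs' => c *: v + lincomb cs' vs'
  | _, _ => 0
  end.

Fixpoint addcoef (cs ds : seq k) : seq k :=
  match cs, ds with
  | c :: cs', d :: ds' => (c + d) :: addcoef cs' ds'
  | [::], _ => ds
  | _, [::] => cs
  end.

Fixpoint coefs_eq0 (cs : seq k) : Prop :=
  if cs is c :: cs' then c = 0 /\ coefs_eq0 cs' else True.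

Lemma lincombD cs ds vs : lincomb (addcoef cs ds) vs = lincomb cs vs + lincomb ds vs.
Proof.
elim: cs ds vs => [|c cs IH] [|d ds] [|v vs] //=; rewrite ?add0r ?addr0 //.
by rewrite IH scalerDl addrACA.
Qed.

Lemma lincombZ a cs vs : lincomb [seq a * c | c <- cs] vs = a *: lincomb cs vs.
Proof.
elim: cs vs => [|c cs IH] [|v vs] //=; rewrite ?scaler0 //.
by rewrite IH scalerDr scalerA.
Qed.

Lemma lincombN cs vs : lincomb [seq - c | c <- cs] vs = - lincomb cs vs.
Proof.
elim: cs vs => [|c cs IH] [|v vs] //=; rewrite ?oppr0 //.
by rewrite IH opprD scaleNr.
Qed.

Lemma lincomb_nth i vs : nth 0 vs i = lincomb (rcons (nseq i 0) 1) vs.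
Proof.
elim: i vs => [|i IH] [|v vs] //=; last by rewrite IH scale0r add0r.
by rewrite scale1r; case: vs => //=; rewrite addr0.
Qed.

Lemma lincomb_eq0 cs vs : coefs_eq0 cs -> lincomb cs vs = 0.
Proof.
elim: cs vs => [|c cs IH] [|v vs] //= [-> /IH ->].
by rewrite scale0r add0r.
Qed.

Lemma eq_of_subr_scale (u v w1 w2 : L) c : w1 = w2 -> u - v = c *: (w1 - w2) -> u = v.
Proof. by move=> ->; rewrite subrr scaler0 => /subr0_eq. Qed.

End LinearCombinations.

Ltac name_atoms vs l i :=
  lazymatch l with
  | nil => idtac
  | cons ?v ?l' =>
      let T := type of v in
      try rewrite -[v]/(nth (0 : T) vs i); name_atoms vs l' constr:(S i)
  end.

(* [lmod_ring l] proves an identity between k-linear combinations of the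
   vectors listed in [l]: both sides are folded into one [lincomb] over [l],
   and the resulting coefficients are shown to vanish by [ring]. *)
Ltac lmod_ring l :=
  let vs := fresh "vs" in
  apply/eqP; rewrite -subr_eq0; apply/eqP;
  rewrite ?(scaler0, scale0r, oppr0, addr0, add0r, subr0, sub0r);
  set vs := l; name_atoms vs l O;
  rewrite !lincomb_nth;
  repeat (rewrite -lincombD || rewrite -lincombN || rewrite -lincombZ);
  apply: lincomb_eq0; rewrite /=; repeat split; ring.

Section LieAlgebra.
Variables (k : fieldType) (L : lmodType k) (br : L -> L -> L).
Hypothesis lieL : is_lie br.

Lemma br_bilinear : bilinear_for
  (GRing.Scale.Law.clone _ _ *:%R _) (GRing.Scale.Law.clone _ _ *:%R _) br.
Proof. by case: lieL => brDZl brDZr _ _; split=> w c u v; rewrite ?brDZl ?brDZr. Qed.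

HB.instance Definition _ := bilinear_isBilinear.Build k L L L _ _ br br_bilinear.

Lemma brvv u : br u u = 0.
Proof. by case: lieL. Qed.

Lemma brC u v : br u v = - br v u.
Proof.
apply/eqP; rewrite -addr_eq0; apply/eqP.
by have := brvv (u + v); rewrite linearDl /= !linearDr /= !brvv add0r addr0.
Qed.

Lemma jacobi a u w : br a (br u w) = br (br a u) w + br u (br a w).
Proof.
case: lieL => _ _ _ /(_ a u w).
rewrite (brC w (br a u)) (brC w a) linearNr /= addrAC => /subr0_eq.
by move/eqP; rewrite subr_eq => /eqP ->; rewrite addrC.
Qed.

Lemma extremal_idsN a f :
  extremal_ids br a f -> extremal_ids br (- a) (fun v => - f v).
Proof.
move=> Ha u w; case: (Ha u w) => E1 E2 E3.
rewrite !(linearNl, linearNr) /= !opprK E1 E2 E3.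
by split; lmod_ring [:: a; br a u; br a w].
Qed.

Lemma extremal_ids_auto (phi : {linear L -> L}) psi b f :
  {morph phi : u v / br u v} -> cancel phi psi -> cancel psi phi ->
  extremal_ids br b f -> extremal_ids br (phi b) (f \o psi).
Proof.
move=> phiM phiK psiK Hb u w.
have [{}u ->] : exists u', u = phi u' by exists (psi u).
have [{}w ->] : exists w', w = phi w' by exists (psi w).
rewrite /= -!phiM !phiK; case: (Hb u w) => E1 E2 E3.
by rewrite E1 E2 E3 !(linearB, linearD, linearZ).
Qed.

Lemma extremal_ids_uniq e f1 f2 : ~ sandwich br e ->
  extremal_ids br e f1 -> extremal_ids br e f2 -> f1 =1 f2.
Proof.
(* if [f1 t <> f2 t], the first identities force [2 = 0] and the second ones put
   [[e, L]] in the span of [e] and [[e, t]]; either way [e] is a sandwich *)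
move=> nse H1 H2 t; apply/eqP; rewrite -subr_eq0; apply/negPn/negP => d0.
apply: nse; have [-> u w|e0] := eqVneq e 0; first by rewrite !linear0l.
set d := f1 t - f2 t in d0.
have two0 : 2 = 0 :> k.
  case: (H1 t t) (H2 t t) => E1 _ _ [E2 _ _].
  have /eqP : (2 * d) *: e = 0 by rewrite mulrBr scalerBl -E1 -E2 subrr.
  by rewrite scaler_eq0 (negPf e0) orbF mulf_eq0 (negPf d0) orbF => /eqP.
have ee0 u : br e (br e u) = 0.
  by case: (H1 u u) => -> _ _; rewrite two0 mul0r scale0r.
have ad_e w : br e w =
    d^-1 *: ((f1 (br t w) - f2 (br t w)) *: e + (f1 w - f2 w) *: br e t).
  apply: (scalerI d0); rewrite scalerKV //.
  case: (H1 t w) (H2 t w) => _ E1 _ [_ E2 _].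
  apply: (eq_of_subr_scale (etrans (esym E1) E2) (c := -1)).
  by rewrite /d; lmod_ring [:: br e w; br e t; e].
move=> u w; split; first exact: ee0.
rewrite (ad_e w) !(linearZr, linearDr) /= (brC u e) linearNr /= ee0 oppr0.
rewrite jacobi ee0 linear0r addr0 (ad_e u) !(linearZl, linearDl) /= brvv ee0.
by rewrite !(scaler0, add0r).
Qed.

Section Simple.
Hypothesis simpleL : simple_lie br.

Lemma simple_perfect (S : L -> Prop) :
  subspace S -> (forall u w, S (br u w)) -> forall v, S v.
Proof.
move=> subS brS v.
pose D v := forall S : L -> Prop, subspace S -> (forall u w, S (br u w)) -> S v.
have idealD : ideal br D.
  split; last by move=> u w _ T _ brT; apply: brT.
  split=> [T [] //|c u w Du Dw T subT brT].
  by apply: subT.2; [apply: Du | apply: Dw].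
case: simpleL => [[u0 [v0 /eqP uv0]] /(_ D idealD)] [D0|Dall].
  by case: uv0; apply: D0 => T _; apply.
exact: Dall.
Qed.

Lemma simple_center0 a : (forall w, br a w = 0) -> a = 0.
Proof.
move=> aZ; pose Z v := forall w, br v w = 0.
have idealZ : ideal br Z.
  split; last by move=> u v Zv w; rewrite (brC u) Zv oppr0 linear0l.
  by split=> [w|c u v Zu Zv w]; rewrite ?linear0l // linearPl /= Zu Zv scaler0 addr0.
case: simpleL => [[u0 [v0 /eqP uv0]] /(_ Z idealZ)] [Z0|Zall]; first exact: Z0.
by case: uv0; apply: Zall.
Qed.

Lemma ad_scalar_eq0 a (lam : L -> k) : (forall w, br a w = lam w *: a) -> a = 0.
Proof.
move=> ad_a; apply: simple_center0.
apply: (@simple_perfect (fun v => br a v = 0)) => [|u w].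
  by split=> [|c u w au aw]; rewrite ?linear0r // linearPr /= au aw scaler0 addr0.
rewrite jacobi ad_a linearZl /= (brC u) ad_a linearZl /= ad_a.
by rewrite !scalerA mulrC subrr.
Qed.

Lemma extremal_ids_comm a b f : a != 0 -> extremal_ids br a f -> br a b = 0 ->
  f b = 0 /\ forall w, f (br b w) = 0.
Proof.
move=> a0 Ha ab0.
have E w : f (br b w) *: a = f b *: br a w.
  case: (Ha b w) => _ + _; rewrite ab0 linear0l scaler0 addr0 => /eqP.
  by rewrite eq_sym subr_eq0 => /eqP.
have fb0 : f b = 0.
  have [//|fbN0] := eqVneq (f b) 0; case/eqP: a0.
  apply: (@ad_scalar_eq0 _ (fun w => (f b)^-1 * f (br b w))) => w.
  by rewrite -scalerA E scalerA mulVf ?scale1r.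
split=> // w; apply/eqP; have /eqP := E w.
by rewrite fb0 scale0r scaler_eq0 (negPf a0) orbF.
Qed.

Section Form.
Variable g : L -> L -> k.
Hypothesis formg : extremal_form br g.

Lemma gC u v : g u v = g v u.
Proof. by case: formg. Qed.

Lemma g_bilinear : bilinear_for
  (GRing.Scale.Law.clone _ _ *%R _) (GRing.Scale.Law.clone _ _ *%R _) g.
Proof.
by case: formg => gC' gDZl _; split=> w c u v; rewrite ?gDZl // !(gC' w) gDZl.
Qed.

HB.instance Definition _ := bilinear_isBilinear.Build k L L k _ _ g g_bilinear.

Lemma extremal_form_ids a : extremal br a -> extremal_ids br a (g a).
Proof. by case: formg => _ _; apply. Qed.

Lemma extremalN a : extremal br a -> extremal br (- a).
Proof.
case=> a0 [f Ha]; split; first by rewrite oppr_eq0.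
by exists (fun v => - f v); apply: extremal_idsN.
Qed.

Lemma g_br_swap a b : extremal br a -> extremal br b ->
  forall w, g a (br b w) = - g b (br a w).
Proof.
move=> ea eb w; have [a0 _] := ea; have [b0 _] := eb.
have Ha := extremal_form_ids ea; have Hb := extremal_form_ids eb.
have [ba0|baN0] := eqVneq (br b a) 0.
  have [_ ->] := extremal_ids_comm b0 Hb ba0.
  have ab0 : br a b = 0 by rewrite brC ba0 oppr0.
  by have [_ ->] := extremal_ids_comm a0 Ha ab0; rewrite oppr0.
(* substituting the third identity for [a] into the third identity for [b]
   leaves [(g a [b, w] + g b [a, w]) [b, a] = 0] *)
case: (Ha b w) (Hb a (br a w)) => _ _ E1 [_ _ E2].
case: (Ha w w) (Hb a a) => E3 _ _ [E4 _ _].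
rewrite E1 E3 !(linearBr, linearZr) /= (brC a b) linearNr /= E4 (gC a b) in E2.
have /eqP : (g a (br b w) + g b (br a w)) *: br b a = 0.
  apply: (eq_of_subr_scale E2 (c := 1)).
  by lmod_ring [:: br b a; b; br b (br a w)].
by rewrite scaler_eq0 (negPf baN0) orbF addr_eq0 => /eqP.
Qed.

(* [exp (ad a)], using [(ad a)^2 v = 2 g a v *: a] to avoid dividing by 2 *)
Definition lie_exp a v := v + br a v + g a v *: a.

Lemma lie_exp_linear a : linear (lie_exp a).
Proof.
move=> c u v; rewrite /lie_exp !linearPr /=.
by lmod_ring [:: u; v; br a u; br a v; a].
Qed.

HB.instance Definition _ a :=
  GRing.isLinear.Build k L L *:%R (lie_exp a) (lie_exp_linear a).

Lemma lie_expM a : extremal br a -> {morph lie_exp a : u v / br u v}.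
Proof.
move=> ea u v; have Ha := extremal_form_ids ea.
case: (Ha u v) (Ha u u) (Ha v v) => _ E2 _ [E1u _ _] [E1v _ _].
rewrite /lie_exp !(linearDl, linearDr, linearZl, linearZr) /= E2.
rewrite (brC u a) (brC (br a u) a) E1u E1v brvv (jacobi a u v).
by lmod_ring [:: br (br a u) v; br u (br a v); br u v; br a u; br a v; a].
Qed.

Lemma lie_expK a : extremal br a -> cancel (lie_exp a) (lie_exp (- a)).
Proof.
move=> ea v; have [a0 _] := ea; have Ha := extremal_form_ids ea.
have [gaa gaba] := extremal_ids_comm a0 Ha (brvv a).
case: (Ha v v) => E1 _ _.
rewrite /lie_exp !(linearNl, linearDr, linearZr) /= gaa gaba brvv E1.
by lmod_ring [:: v; br a v; a].
Qed.

Lemma lie_expNK a : extremal br a -> cancel (lie_exp (- a)) (lie_exp a).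
Proof. by move=> /extremalN/lie_expK; rewrite opprK. Qed.

Lemma lie_exp_pure a b : extremal br a -> pure br b ->
  pure br (lie_exp a b) /\ g (lie_exp a b) =1 g b \o lie_exp (- a).
Proof.
move=> ea [eb nsb].
have expM := lie_expM ea; have expK := lie_expK ea.
have He := extremal_ids_auto expM expK (lie_expNK ea) (extremal_form_ids eb).
have nse : ~ sandwich br (lie_exp a b).
  move=> se; apply: nsb => u w.
  rewrite -(expK (br b (br b u))) -(expK (br b (br u (br b w)))) !expM.
  by case: (se (lie_exp a u) (lie_exp a w)) => -> ->; rewrite linear0.
have e0 : lie_exp a b != 0.
  by apply/eqP => e0; apply: nse => u w; rewrite e0 !linear0l.
have ee : extremal br (lie_exp a b) by split=> //; exists (g b \o lie_exp (- a)).
by split=> //; apply: extremal_ids_uniq nse (extremal_form_ids ee) He.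
Qed.

Lemma g_br_pure a b : extremal br a -> pure br b ->
  forall t, g (br a b) t = - g b (br a t).
Proof.
move=> ea pb t; have [_ /(_ t)] := lie_exp_pure ea pb.
rewrite /lie_exp /= !(linearDl, linearDr, linearZl, linearZr) /=.
rewrite !(linearNl, linearNr) /= (gC b a) => E.
apply: (addrI (g b t)); apply: (addIr (g a b * g a t)); rewrite E; ring.
Qed.

Lemma sandwich_brE a b : extremal br a -> sandwich br a -> g a b = 1 ->
  forall w, br a w = g a (br b w) *: a - g a w *: br a b.
Proof.
move=> ea sa gab w.
case: (extremal_form_ids ea b w) (sa b w) => _ _ E [_ E0].
apply: (eq_of_subr_scale (etrans (esym E) E0) (c := -1)); rewrite gab.
by lmod_ring [:: br a w; a; br a b].
Qed.

Lemma hyperbolic_pair_not_sandwich x y : extremal br x -> extremal br y ->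
  g x y = 1 -> sandwich br x -> sandwich br y -> False.
Proof.
move=> ex ey gxy sx sy; have [x0 _] := ex.
have gyx : g y x = 1 by rewrite gC.
have xyN0 : br x y != 0.
  apply/eqP => xy0; have [gxy0 _] := extremal_ids_comm x0 (extremal_form_ids ex) xy0.
  by move/eqP: gxy0; rewrite gxy oner_eq0.
case/eqP: xyN0; apply: (@ad_scalar_eq0 _ (fun w => g y (br x w) + g x (br y w))) => w.
have -> : br (br x y) w = br x (br y w) - br y (br x w) by rewrite jacobi addrK.
have -> : br x (br y w) = g y (br x w) *: br x y.
  rewrite (sandwich_brE ey sy gyx w) linearBr !linearZr /= (brC y x) linearNr /=.
  by rewrite (sx y y).1 oppr0 scaler0 subr0.
have -> : br y (br x w) = g x (br y w) *: br y x.
  rewrite (sandwich_brE ex sx gxy w) linearBr !linearZr /= (brC x y) linearNr /=.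
  by rewrite (sy x x).1 oppr0 scaler0 subr0.
by rewrite (brC y x); lmod_ring [:: br x y].
Qed.

Lemma g_br_hyperbolic x y : extremal br x -> extremal br y -> g x y = 1 ->
  forall t, g (br x y) t = g x (br y t).
Proof.
move=> ex ey gxy t.
have [sy|nsy] := classic (sandwich br y).
  have [sx|nsx] := classic (sandwich br x).
    by case: (hyperbolic_pair_not_sandwich ex ey gxy sx sy).
  by rewrite brC linearNl /= (g_br_pure ey (conj ex nsx)) opprK.
by rewrite (g_br_pure ex (conj ey nsy)) (g_br_swap ex ey).
Qed.

Lemma gradU_sym x y u : gradU br g y x u <-> gradU br g x y u.
Proof.
have E : g u (br y x) = - g u (br x y) by rewrite (brC y x) linearNr.
split=> [[uy [ux uyx]]|[ux [uy uxy]]]; do !split=> //.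
  by apply: oppr_inj; rewrite -E uyx oppr0.
by rewrite E uxy oppr0.
Qed.

Section PureRadical.
Hypothesis genL : generated_by_pure br.

Definition pure_radical v := forall a, pure br a -> g a v = 0.

Lemma pure_radical_ideal : ideal br pure_radical.
Proof.
have subR : subspace pure_radical.
  split=> [a _|c u v Ru Rv a pa]; first exact: linear0r.
  by rewrite linearPr /= Ru // Rv // mulr0 addr0.
split=> //; pose N u := forall v, pure_radical v -> pure_radical (br u v).
apply: (genL (S := N)) => [|b pb v Rv a pa].
  split; first split.
  - by move=> v _; rewrite linear0l; exact: subR.1.
  - move=> c u1 u2 N1 N2 v Rv; rewrite linearPl /=.
    by apply: subR.2; [exact: N1 | exact: N2].
  - move=> u1 u2 N1 N2 v Rv.
    have -> : br (br u1 u2) v = -1 *: br u2 (br u1 v) + br u1 (br u2 v).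
      by rewrite (jacobi u1 u2 v) scaleN1r addrCA addNr addr0.
    by apply: subR.2; [apply/N2/N1 | apply/N1/N2].
(* [g (lie_exp b a) v = g a (lie_exp (- b) v)] reduces to [0 = - g a [b, v]] *)
have [pe /(_ v)] := lie_exp_pure pb.1 pa.
rewrite Rv //= /lie_exp !(linearDr, linearNl, linearZr) /= Rv // Rv //.
by rewrite linearNr oppr0 mul0r addr0 add0r => /eqP; rewrite eq_sym oppr_eq0 => /eqP.
Qed.

Lemma pure_radical_eq0 v : pure_radical v -> v = 0.
Proof.
move=> Rv; case: simpleL => [[u0 [v0 /eqP uv0]] /(_ _ pure_radical_ideal)].
case=> [R0|Rall]; first exact: R0.
have nopure a : ~ pure br a.
  move=> pa; apply: pa.2 => u w.
  case: (extremal_form_ids pa.1 u w) => E1 _ E3.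
  by rewrite E1 E3 !(Rall _ a pa) mulr0 !scale0r !subr0.
have sub0 : subalgebra br (fun v => v = 0).
  split; first split=> [//|c u w -> ->]; first by rewrite scaler0 addr0.
  by move=> u w -> ->; rewrite linear0l.
case: uv0; rewrite (genL sub0 (fun a pa => False_ind _ (nopure a pa)) u0).
exact: linear0l.
Qed.

Section HyperbolicPair.
Variables x y : L.
Hypotheses (ex : extremal br x) (ey : extremal br y) (gxy : g x y = 1).

Lemma gradU_lift v : g x v = 0 ->
  exists2 w, gradU br g x y w & exists c, br x w = br x v + c *: x.
Proof.
move=> gxv; have [x0 _] := ex; have [y0 _] := ey.
have Hx := extremal_form_ids ex; have Hy := extremal_form_ids ey.
have [_ gxb] := extremal_ids_comm x0 Hx (brvv x).
have [_ gyb] := extremal_ids_comm y0 Hy (brvv y).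
have gyx : g y x = 1 by rewrite gC.
set s := - g y (br x v).
exists (- br y (br x v) + s *: br x y).
  split; last split.
  - rewrite gC linearDr linearNr linearZr /= gxb (g_br_swap ex ey).
    by case: (Hx v v) => -> _ _; rewrite linearZr /= gxv mulr0 mul0r !oppr0 add0r mulr0.
  - rewrite gC linearDr linearNr linearZr /= gyb (brC x y) linearNr /= gyb.
    by rewrite !oppr0 mulr0 addr0.
  - rewrite gC (g_br_hyperbolic ex ey gxy) linearDr linearNr linearZr /=.
    rewrite (brC x y) linearNr /=.
    case: (Hy (br x v) (br x v)) (Hy x x) => E1 _ _ [E2 _ _]; rewrite E1 E2.
    by rewrite !(linearDr, linearNr, linearZr) /= gyx gxy /s; ring.
exists (2 * s - g x (br y v)).
rewrite !(linearDr, linearNr, linearZr) /=; case: (Hx y v) (Hx y y) => _ _ -> [-> _ _].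
by rewrite gxv gxy; lmod_ring [:: br x v; br x y; x].
Qed.

Lemma Zcenter_m1_ker u : gradU br g x y u ->
  (forall w, gradU br g x y w -> br (br x u) (br x w) = 0) ->
  forall v, g x v = 0 -> g x (br u v) = 0.
Proof.
move=> [gux _] Zu v gxv; have [x0 _] := ex; have Hx := extremal_form_ids ex.
have [w Uw [c xw]] := gradU_lift gxv.
move: (Zu w Uw); rewrite xw linearDr linearZr /= (brC (br x u) x).
case: (Hx u u) (Hx u v) => -> _ _ [_ -> _].
rewrite gxv (gC x u) gux mulr0 !scale0r oppr0 scaler0 !addr0.
by move/eqP; rewrite scaler_eq0 (negPf x0) orbF => /eqP.
Qed.

Lemma Zcenter_m1_eq0 z : Zcenter br (grad_m1 br g x y) z -> z = 0.
Proof.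
case=> [[u [Uu ->]] Zu].
have Zu' w : gradU br g x y w -> br (br x u) (br x w) = 0.
  by move=> Uw; apply: Zu; exists w.
apply: pure_radical_eq0 => a pa.
rewrite (g_br_swap pa.1 ex) (brC a) linearNr /= opprK.
have -> : a = (a - g x a *: y) + g x a *: y by rewrite subrK.
rewrite linearDr linearZr /= linearDr linearZr /=.
rewrite (Zcenter_m1_ker Uu Zu'); last by rewrite linearBr linearZr /= gxy mulr1 subrr.
rewrite (brC u y) linearNr /= -(g_br_hyperbolic ex ey gxy) (gC (br x y)).
by case: Uu => _ [_ ->]; rewrite oppr0 mulr0 add0r.
Qed.

End HyperbolicPair.

Lemma Zcenter_p1_eq0 x y : extremal br x -> extremal br y -> g x y = 1 ->
  forall z, Zcenter br (grad_p1 br g x y) z -> z = 0.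
Proof.
move=> ex ey gxy _ [[u [Uu ->]] Zu].
have gyx : g y x = 1 by rewrite gC.
apply: (Zcenter_m1_eq0 ey ex gyx); split.
  by exists u; split=> //; apply/gradU_sym.
by move=> _ [w [Uw ->]]; apply: Zu; exists w; split=> //; apply/gradU_sym.
Qed.

End PureRadical.
End Form.
End Simple.
End LieAlgebra.

Theorem lemma2p11 (k : fieldType) (L : lmodType k) (br : L -> L -> L)
  (g : L -> L -> k) (x y : L) :
  is_lie br -> simple_lie br -> generated_by_pure br ->
  extremal_form br g ->
  extremal br x -> extremal br y -> g x y = 1 ->
  (forall z, Zcenter br (grad_m1 br g x y) z -> z = 0) /\
  (forall z, Zcenter br (grad_p1 br g x y) z -> z = 0).
Proof.
move=> lieL simpleL genL formg ex ey gxy.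
split; [exact: (Zcenter_m1_eq0 lieL simpleL formg genL ex ey gxy)
      | exact: (Zcenter_p1_eq0 lieL simpleL formg genL ex ey gxy)].
Qed.
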